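(* With $n_1,n_2,c,\varepsilon,\omega,\Omega$ as below and $\mathcal{O}\subset\mathbb{R}^2_+$ bounded, for $\gamma>0$, $\tau>0$ let $\mathcal{O}_0(\gamma)$ be the set of $\xi\in\mathcal{O}$ such that for all $k\in\mathbb{Z}^2\setminus\{0\}$ and all $i,j\in\mathbb{Z}_1$: $|\langle k,\omega(\xi)\rangle|\ge\gamma|k|^{-\tau}$; $|\langle k,\omega(\xi)\rangle\pm\Omega_j(\xi)|\ge\gamma|j|^{2}|k|^{-\tau}$; $|\langle k,\omega(\xi)\rangle\pm(\Omega_i(\xi)+\Omega_j(\xi))|\ge\gamma(|i|+|j|)^2|k|^{-\tau}$; $|\langle k,\omega(\xi)\rangle+\Omega_i(\xi)-\Omega_j(\xi)|\ge\gamma(|i|-|j|)(|i|+|j|)|k|^{-\tau}$ whenever $|i|\ne|j|$; $|\langle k,\omega(\xi)\rangle+\Omega_j(\xi)-\Omega_{-j}(\xi)|\ge\gamma|j||k|^{-\tau}$ (whenever $j,-j\in\mathbb{Z}_1$). Then for $\tau$ sufficiently large there exist $\gamma_0>0$ and $C>0$ (independent of $\gamma$) such that $\mathrm{meas}(\mathcal{O}\setminus\mathcal{O}_0(\gamma))\le C\gamma$ for all $0<\gamma\le\gamma_0$.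
   Context: $n_1,n_2$ are integers with $n_2>n_1>0$, $n_1$ odd, $n_2-n_1=4$; $c>0$, $\varepsilon>0$ with $\varepsilon^{-4}>\frac{c}{2\pi}$; $\mathbb{Z}_1=\mathbb{Z}\setminus\{0,n_1,n_2\}$; $|k|=|k_1|+|k_2|$. $\omega_1(\xi)=\varepsilon^{-4}n_1^2+\frac{1}{4\pi}(n_1+n_2)c+\frac1{4\pi}(n_1-n_2)\xi_1$, $\omega_2(\xi)=\varepsilon^{-4}n_2^2+\frac{1}{4\pi}(n_1+n_2)c+\frac1{4\pi}(n_2-n_1)\xi_2$, $\Omega_j(\xi)=\varepsilon^{-4}j^2+\frac{1}{4\pi}(cj+n_1\xi_1+n_2\xi_2)$ for $j\in\mathbb{Z}_1$. ''meas'' is Lebesgue measure on $\mathbb{R}^2$. *)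

From Stdlib Require Import Reals Lra ZArith.
Open Scope R_scope.

Definition pt := (R * R)%type.

Definition omega1 (n1 n2 : Z) (c eps : R) (xi : pt) : R :=
  / (eps ^ 4) * (IZR n1) ^ 2 + / (4 * PI) * IZR (n1 + n2) * c
  + / (4 * PI) * IZR (n1 - n2) * fst xi.

Definition omega2 (n1 n2 : Z) (c eps : R) (xi : pt) : R :=
  / (eps ^ 4) * (IZR n2) ^ 2 + / (4 * PI) * IZR (n1 + n2) * c
  + / (4 * PI) * IZR (n2 - n1) * snd xi.

Definition Omega (n1 n2 : Z) (c eps : R) (j : Z) (xi : pt) : R :=
  / (eps ^ 4) * (IZR j) ^ 2
  + / (4 * PI) * (c * IZR j + IZR n1 * fst xi + IZR n2 * snd xi).

Definition inZ1 (n1 n2 j : Z) : Prop := j <> 0%Z /\ j <> n1 /\ j <> n2.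

Definition kdot (n1 n2 : Z) (c eps : R) (k1 k2 : Z) (xi : pt) : R :=
  IZR k1 * omega1 n1 n2 c eps xi + IZR k2 * omega2 n1 n2 c eps xi.

Definition knorm (k1 k2 : Z) : R := IZR (Z.abs k1 + Z.abs k2).

Definition zabs (j : Z) : R := IZR (Z.abs j).

Definition O0 (n1 n2 : Z) (c eps : R) (O : pt -> Prop) (gamma tau : R)
  (xi : pt) : Prop :=
  O xi /\
  forall k1 k2 : Z, (k1 <> 0%Z \/ k2 <> 0%Z) ->
    let w := kdot n1 n2 c eps k1 k2 xi in
    let kt := Rpower (knorm k1 k2) (- tau) in
    let Om := fun j => Omega n1 n2 c eps j xi in
    Rabs w >= gamma * kt /\
    (forall j, inZ1 n1 n2 j ->
       Rabs (w + Om j) >= gamma * (zabs j) ^ 2 * kt /\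
       Rabs (w - Om j) >= gamma * (zabs j) ^ 2 * kt) /\
    (forall i j, inZ1 n1 n2 i -> inZ1 n1 n2 j ->
       Rabs (w + (Om i + Om j)) >= gamma * (zabs i + zabs j) ^ 2 * kt /\
       Rabs (w - (Om i + Om j)) >= gamma * (zabs i + zabs j) ^ 2 * kt) /\
    (forall i j, inZ1 n1 n2 i -> inZ1 n1 n2 j -> zabs i <> zabs j ->
       Rabs (w + Om i - Om j)
         >= gamma * (zabs i - zabs j) * (zabs i + zabs j) * kt) /\
    (forall j, inZ1 n1 n2 j -> inZ1 n1 n2 (- j)%Z ->
       Rabs (w + Om j - Om (- j)%Z) >= gamma * zabs j * kt).

(* Lebesgue outer measure on R^2 (defined via countable covers by closed
   rectangles [a_n,b_n] x [c_n,d_n]):  meas_le A x  <->  meas*(A) <= x,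
   i.e. for every eps > 0 there is a countable rectangle cover of A of total
   area at most x + eps. *)
Definition meas_le (A : pt -> Prop) (x : R) : Prop :=
  forall e : R, e > 0 ->
  exists a b c d : nat -> R,
    (forall n, a n <= b n /\ c n <= d n) /\
    (forall p, A p -> exists n,
        a n <= fst p <= b n /\ c n <= snd p <= d n) /\
    (forall N, sum_f_R0 (fun n => (b n - a n) * (d n - c n)) N <= x + e).

From Stdlib Require Import Reals ZArith Lra Lia Psatz List Cantor ClassicalEpsilon Classical.
Import ListNotations.
Open Scope R_scope.

(* For fixed k <> 0 and fixed indices, each quantity <k, omega(xi)> + s Omega_i(xi) + t Omega_j(xi)
   controlled in O_0(gamma) is affine in xi, with gradient 1/(4 pi) times the integer vector
   (-4 k1 + (s + t) n1, 4 k2 + (s + t) n2); this vector is nonzero because n1 is odd, so inside a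
   box containing O the quantity is small only on a strip of area proportional to the threshold.
   The constant part eps^-4 (s i^2 + t j^2) + c/(4 pi) (s i + t j) dominates once the indices
   exceed D |k|, since the xi-dependent part is O(|k|); so for |k| = m only O(m^2) strips matter,
   each of area O(gamma m^(2 - tau)).  Summing over the O(m^2) vectors with |k| = m gives
   O(gamma m^(6 - tau)), which is summable in m when tau >= 8. *)

(** * Outer measure *)

Lemma meas_le_mono (A B : pt -> Prop) (x y : R) :
  (forall p, A p -> B p) -> x <= y -> meas_le B x -> meas_le A y.
Proof.
  intros HAB Hxy HB e He.
  destruct (HB e He) as (a & b & c & d & Hab & Hcov & Hsum).
  exists a, b, c, d. split; [exact Hab | split].
  - intros p Hp. exact (Hcov p (HAB p Hp)).
  - intros N. specialize (Hsum N). lra.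
Qed.

Lemma meas_le_approx (A : pt -> Prop) (x : R) :
  (forall e, e > 0 -> meas_le A (x + e)) -> meas_le A x.
Proof.
  intros HA e He.
  destruct (HA (e / 2) ltac:(lra) (e / 2) ltac:(lra)) as (a & b & c & d & Hab & Hcov & Hsum).
  exists a, b, c, d. split; [exact Hab | split; [exact Hcov |]].
  intros N. specialize (Hsum N). lra.
Qed.

Lemma meas_le_rect (A : pt -> Prop) (a b c d : R) :
  a <= b -> c <= d ->
  (forall p, A p -> a <= fst p <= b /\ c <= snd p <= d) ->
  meas_le A ((b - a) * (d - c)).
Proof.
  intros Hab Hcd HA e He.
  exists (fun n => match n with O => a | _ => 0 end),
         (fun n => match n with O => b | _ => 0 end),
         (fun n => match n with O => c | _ => 0 end),
         (fun n => match n with O => d | _ => 0 end).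
  split; [intros [| n]; lra | split].
  - intros p Hp. exists O. exact (HA p Hp).
  - intros N. induction N as [| N IH]; simpl in *; lra.
Qed.

Lemma meas_le_empty (A : pt -> Prop) (x : R) :
  (forall p, ~ A p) -> 0 <= x -> meas_le A x.
Proof.
  intros HA Hx. apply (meas_le_mono A A ((0 - 0) * (0 - 0)) x); [auto | lra |].
  apply meas_le_rect; [lra | lra |]. intros p Hp. contradiction (HA p Hp).
Qed.

Lemma meas_le_swap (A : pt -> Prop) (x : R) :
  meas_le A x -> meas_le (fun p => A (snd p, fst p)) x.
Proof.
  intros HA e He. destruct (HA e He) as (a & b & c & d & Hab & Hcov & Hsum).
  exists c, d, a, b. split; [intros n; specialize (Hab n); tauto | split].
  - intros p Hp. destruct (Hcov _ Hp) as [n Hn]. exists n. simpl in Hn. tauto.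
  - intros N. rewrite (sum_eq _ (fun n => (b n - a n) * (d n - c n))); [apply Hsum |].
    intros; ring.
Qed.

Definition list_sumR {X : Type} (f : X -> R) (l : list X) : R :=
  fold_right (fun x s => f x + s) 0 l.

Lemma list_sumR_app {X : Type} (f : X -> R) (l1 l2 : list X) :
  list_sumR f (l1 ++ l2) = list_sumR f l1 + list_sumR f l2.
Proof. unfold list_sumR. induction l1 as [| x l1 IH]; simpl; [ring | rewrite IH; ring]. Qed.

Lemma list_sumR_seq (f : nat -> R) (K : nat) :
  list_sumR f (seq 0 (S K)) = sum_f_R0 f K.
Proof.
  induction K as [| K IH]; [simpl; ring |].
  rewrite seq_S, list_sumR_app, IH. simpl. ring.
Qed.

Lemma list_sumR_prod {X Y : Type} (f : X * Y -> R) (l : list X) (l' : list Y) :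
  list_sumR f (list_prod l l') = list_sumR (fun x => list_sumR (fun y => f (x, y)) l') l.
Proof.
  induction l as [| x l IH]; [reflexivity |].
  simpl list_prod. rewrite list_sumR_app, IH.
  unfold list_sumR at 1 3. simpl. f_equal. clear. induction l'; simpl; congruence.
Qed.

Lemma list_sumR_nonneg {X : Type} (f : X -> R) (l : list X) :
  (forall x, 0 <= f x) -> 0 <= list_sumR f l.
Proof. intros Hf. unfold list_sumR. induction l as [| x l IH]; simpl; [lra | pose proof (Hf x); lra]. Qed.

Lemma list_sumR_extract {X : Type} (f : X -> R) (l1 l2 : list X) (x : X) :
  list_sumR f (l1 ++ x :: l2) = f x + list_sumR f (l1 ++ l2).
Proof. rewrite !list_sumR_app. simpl. ring. Qed.

Lemma sum_injective_le_list_sumR {X : Type} (f : X -> R) (g : nat -> X) (N0 : nat) :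
  (forall x, 0 <= f x) ->
  (forall N M, (N <= N0)%nat -> (M <= N0)%nat -> g N = g M -> N = M) ->
  forall l, (forall N, (N <= N0)%nat -> In (g N) l) ->
  sum_f_R0 (fun N => f (g N)) N0 <= list_sumR f l.
Proof.
  intros Hf. induction N0 as [| N0 IH]; intros Hinj l Hl;
    [destruct (in_split _ _ (Hl O (le_n O))) as (l1 & l2 & ->)
    |destruct (in_split _ _ (Hl (S N0) (le_n _))) as (l1 & l2 & ->)];
    rewrite list_sumR_extract; simpl.
  - pose proof (list_sumR_nonneg f (l1 ++ l2) Hf). lra.
  - enough (sum_f_R0 (fun N => f (g N)) N0 <= list_sumR f (l1 ++ l2)) by lra.
    apply IH; [intros N M HN HM; apply Hinj; lia |].
    intros N HN. specialize (Hl N ltac:(lia)).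
    apply in_app_or in Hl. apply in_or_app.
    destruct Hl as [H | [H | H]]; auto.
    apply Hinj in H; lia.
Qed.

Lemma list_sumR_le {X : Type} (f g : X -> R) (l : list X) :
  (forall x, In x l -> f x <= g x) -> list_sumR f l <= list_sumR g l.
Proof.
  unfold list_sumR. induction l as [| x l IH]; intros Hfg; simpl; [lra |].
  pose proof (Hfg x (or_introl eq_refl)).
  assert (fold_right (fun y s => f y + s) 0 l <= fold_right (fun y s => g y + s) 0 l)
    by (apply IH; intros y Hy; apply Hfg; now right).
  lra.
Qed.

Lemma sum_inv_pow2 (K : nat) : sum_f_R0 (fun n => / 2 ^ S n) K = 1 - / 2 ^ S K.
Proof.
  induction K as [| K IH]; [simpl; field |].
  rewrite tech5, IH. simpl. field. apply pow_nonzero. lra.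
Qed.

Definition rect_cover (A : pt -> Prop) (y : R) (a b c d : nat -> R) : Prop :=
  (forall n, a n <= b n /\ c n <= d n) /\
  (forall p, A p -> exists n, a n <= fst p <= b n /\ c n <= snd p <= d n) /\
  (forall N, sum_f_R0 (fun n => (b n - a n) * (d n - c n)) N <= y).

(* The n-th set gets a cover of excess e / 2^(n+1); the covers are merged along
   Cantor's enumeration of nat * nat. *)
Lemma meas_le_countable_union (A : pt -> Prop) (B : nat -> pt -> Prop) (x : nat -> R) (X : R) :
  (forall p, A p -> exists n, B n p) -> (forall n, meas_le (B n) (x n)) ->
  (forall N, sum_f_R0 x N <= X) -> meas_le A X.
Proof.
  intros HA HB HX e He.
  destruct (choice (fun n (q : (nat -> R) * (nat -> R) * (nat -> R) * (nat -> R)) =>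
      rect_cover (B n) (x n + e / 2 ^ S n) (fst (fst (fst q))) (snd (fst (fst q)))
        (snd (fst q)) (snd q))) as [Q HQ].
  { intros n. assert (He' : e / 2 ^ S n > 0) by (apply Rdiv_lt_0_compat; [lra | apply pow_lt; lra]).
    destruct (HB n _ He') as (a & b & c & d & Hcov). exists (a, b, c, d). exact Hcov. }
  set (a := fun n => fst (fst (fst (Q n)))). set (b := fun n => snd (fst (fst (Q n)))).
  set (c := fun n => snd (fst (Q n))). set (d := fun n => snd (Q n)).
  change (forall n, rect_cover (B n) (x n + e / 2 ^ S n) (a n) (b n) (c n) (d n)) in HQ.
  clearbody a b c d.
  set (area := fun q : nat * nat => (b (fst q) (snd q) - a (fst q) (snd q))
                                   * (d (fst q) (snd q) - c (fst q) (snd q))).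
  exists (fun N => a (fst (of_nat N)) (snd (of_nat N))), (fun N => b (fst (of_nat N)) (snd (of_nat N))),
         (fun N => c (fst (of_nat N)) (snd (of_nat N))), (fun N => d (fst (of_nat N)) (snd (of_nat N))).
  split; [| split].
  - intros N. apply (HQ _).
  - intros p Hp. destruct (HA p Hp) as [n Hn]. destruct (proj1 (proj2 (HQ n)) p Hn) as [i Hi].
    exists (to_nat (n, i)). rewrite cancel_of_to. exact Hi.
  - intros N0. change (sum_f_R0 (fun N => area (of_nat N)) N0 <= X + e).
    assert (Harea : forall q, 0 <= area q).
    { intros [n i]. unfold area. destruct (proj1 (HQ n) i). simpl. nra. }
    eapply Rle_trans.
    { apply (sum_injective_le_list_sumR area of_nat N0 Harea) with
        (l := list_prod (seq 0 (S N0)) (seq 0 (S N0))).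
      - intros N M _ _ HNM. rewrite <- (cancel_to_of N), <- (cancel_to_of M), HNM. reflexivity.
      - intros N HN. rewrite (surjective_pairing (of_nat N)). apply in_prod; apply in_seq;
          pose proof (to_nat_non_decreasing (fst (of_nat N)) (snd (of_nat N))) as Hdiag;
          rewrite <- surjective_pairing, cancel_to_of in Hdiag; lia. }
    rewrite list_sumR_prod. eapply Rle_trans.
    { apply (list_sumR_le _ (fun n => x n + e / 2 ^ S n)). intros n _.
      unfold area; cbn [fst snd]. rewrite (list_sumR_seq (fun i => (b n i - a n i) * (d n i - c n i))).
      apply (HQ n). }
    rewrite list_sumR_seq, sum_plus.
    assert (sum_f_R0 (fun n => e / 2 ^ S n) N0 <= e).
    { rewrite (sum_eq _ (fun n => / 2 ^ S n * e)) by (intros; unfold Rdiv; ring).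
      rewrite <- scal_sum, sum_inv_pow2.
      assert (0 < / 2 ^ S N0) by (apply Rinv_0_lt_compat, pow_lt; lra). nra. }
    specialize (HX N0). lra.
Qed.

Lemma meas_le_union (A B C : pt -> Prop) (x y : R) :
  (forall p, A p -> B p \/ C p) -> meas_le B x -> meas_le C y -> 0 <= x -> 0 <= y ->
  meas_le A (x + y).
Proof.
  intros HA HB HC Hx Hy.
  apply (meas_le_countable_union A (fun n => match n with O => B | 1%nat => C | _ => fun _ => False end)
           (fun n => match n with O => x | 1%nat => y | _ => 0 end)).
  - intros p Hp. destruct (HA p Hp); [exists O | exists 1%nat]; assumption.
  - intros [| [| n]]; [exact HB | exact HC |]. apply meas_le_empty; [auto | lra].
  - intros N. induction N as [| [| N] IH]; simpl in *; lra.
Qed.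

Lemma meas_le_union_list {X : Type} (l : list X) (B : X -> pt -> Prop) (A : pt -> Prop) (x : R) :
  0 <= x -> (forall p, A p -> exists y, In y l /\ B y p) ->
  (forall y, In y l -> meas_le (B y) x) -> meas_le A (INR (length l) * x).
Proof.
  intros Hx. revert A. induction l as [| y l IH]; intros A HA HB.
  - apply meas_le_empty; [intros p Hp; destruct (HA p Hp) as (? & [] & _) | simpl; lra].
  - replace (INR (length (y :: l)) * x) with (x + INR (length l) * x)
      by (simpl length; rewrite S_INR; ring).
    apply (meas_le_union A (B y) (fun p => exists z, In z l /\ B z p)).
    + intros p Hp. destruct (HA p Hp) as (z & [<- | Hz] & Hzp); [left | right; exists z]; auto.
    + apply HB. now left.
    + apply IH; auto. intros z Hz. apply HB. now right.
    + exact Hx.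
    + pose proof (pos_INR (length l)). nra.
Qed.

(** * Strips *)

Definition in_box (M : R) (xi : pt) : Prop := Rabs (fst xi) <= M /\ Rabs (snd xi) <= M.

Lemma Rabs_le_inv (a b : R) : Rabs a <= b -> - b <= a <= b.
Proof. intros H. unfold Rabs in H. destruct (Rcase_abs a); lra. Qed.

Lemma nat_above (r : R) : exists n : nat, r <= INR n.
Proof.
  destruct (archimed r) as [Hup _]. exists (Z.to_nat (up r)).
  destruct (Z.le_gt_cases 0 (up r)).
  - rewrite INR_IZR_INZ, Z2Nat.id by lia. lra.
  - assert (IZR (up r) < 0) by (apply IZR_lt; lia). pose proof (pos_INR (Z.to_nat (up r))). lra.
Qed.

Lemma interval_piece (h t : R) (L : nat) :
  0 < h -> 0 <= t <= INR (S L) * h -> exists i, (i <= L)%nat /\ INR i * h <= t <= INR (S i) * h.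
Proof.
  intros Hh. induction L as [| L IH]; intros Ht.
  - exists O. split; [lia |]. simpl in *. lra.
  - destruct (Rle_dec t (INR (S L) * h)).
    + destruct IH as (i & Hi & Hti); [lra |]. exists i. split; [lia | lra].
    + exists (S L). split; [lia | lra].
Qed.

(* Slice the box into L+1 horizontal bands of height h; in each band the strip lies in
   a rectangle of width 2 (delta + |q| h) / |p|. *)
Lemma strip_measure (M alpha p q delta : R) :
  0 < M -> 0 < delta -> p <> 0 ->
  meas_le (fun xi => in_box M xi /\ Rabs (alpha + p * fst xi + q * snd xi) < delta)
          (4 * M * delta / Rabs p).
Proof.
  intros HM Hd Hp. apply meas_le_approx. intros e He.
  assert (Hap : 0 < Rabs p) by (apply Rabs_pos_lt; auto).
  pose proof (Rabs_pos q) as Hq.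
  destruct (nat_above (8 * M * M * Rabs q / (Rabs p * e))) as [L HL].
  assert (HSL : 0 < INR (S L)) by (apply lt_0_INR; lia).
  set (h := 2 * M / INR (S L)).
  assert (Hh : 0 < h) by (unfold h; apply Rdiv_lt_0_compat; lra).
  assert (HLh : INR (S L) * h = 2 * M) by (unfold h; field; lra).
  set (r := (delta + Rabs q * h) / Rabs p).
  set (v := fun i => - M + INR i * h).
  set (ctr := fun i => - (alpha + q * v i) / p).
  assert (Hr : 0 < r) by (unfold r; apply Rdiv_lt_0_compat; nra).
  set (band := fun i xi => ctr i - r <= fst xi <= ctr i + r /\ v i <= snd xi <= v i + h).
  assert (Hbands : meas_le (fun xi => exists i, In i (seq 0 (S L)) /\ band i xi)
                     (INR (S L) * (2 * r * h))).
  { replace (INR (S L)) with (INR (length (seq 0 (S L)))) by now rewrite length_seq.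
    apply (meas_le_union_list _ band); [nra | intros xi Hxi; exact Hxi |].
    intros i _. replace (2 * r * h) with ((ctr i + r - (ctr i - r)) * (v i + h - v i)) by ring.
    apply meas_le_rect; [lra | lra | auto]. }
  refine (meas_le_mono _ _ _ _ _ _ Hbands).
  - intros [x y] [[Hx Hy] Hf]. cbn [fst snd] in *.
    apply Rabs_le_inv in Hy.
    destruct (interval_piece h (y + M) L Hh) as (i & Hi & Hyi); [lra |].
    exists i. split; [apply in_seq; lia |].
    assert (Hyv : Rabs (y - v i) <= h) by (unfold v; rewrite S_INR in Hyi; apply Rabs_le; lra).
    assert (Hxc : x - ctr i = ((alpha + p * x + q * y) - q * (y - v i)) / p)
      by (unfold ctr; field; auto).
    assert (Hxr : Rabs (x - ctr i) <= r).
    { rewrite Hxc. unfold Rdiv. rewrite Rabs_mult, Rabs_inv. unfold r, Rdiv.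
      apply Rmult_le_compat_r; [left; apply Rinv_0_lt_compat; auto |].
      eapply Rle_trans; [apply Rabs_triang |]. rewrite Rabs_Ropp, Rabs_mult. nra. }
    apply Rabs_le_inv in Hxr. unfold band, v in *. rewrite S_INR in Hyi. cbn [fst snd]. lra.
  - replace (INR (S L) * (2 * r * h)) with (4 * M * delta / Rabs p + 4 * M * Rabs q * h / Rabs p)
      by (replace (INR (S L) * (2 * r * h)) with (2 * r * (INR (S L) * h)) by ring;
          rewrite HLh; unfold r; field; lra).
    enough (4 * M * Rabs q * h / Rabs p <= e) by lra.
    assert (Hnum : 8 * M * M * Rabs q <= INR (S L) * Rabs p * e).
    { rewrite S_INR.
      replace (8 * M * M * Rabs q) with (8 * M * M * Rabs q / (Rabs p * e) * (Rabs p * e))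
        by (field; lra).
      assert (0 < Rabs p * e) by nra.
      apply Rmult_le_compat_r with (r := Rabs p * e) in HL; lra. }
    replace (4 * M * Rabs q * h / Rabs p) with (8 * M * M * Rabs q / (INR (S L) * Rabs p))
      by (unfold h; field; lra).
    apply Rmult_le_reg_r with (INR (S L) * Rabs p); [nra |].
    unfold Rdiv. rewrite Rmult_assoc, Rinv_l by nra. nra.
Qed.

Lemma strip_measure_le (M alpha p q delta r : R) :
  0 < M -> 0 < delta -> 0 < r -> r <= Rabs p ->
  meas_le (fun xi => in_box M xi /\ Rabs (alpha + p * fst xi + q * snd xi) < delta)
          (4 * M * delta / r).
Proof.
  intros HM Hd Hr Hp.
  apply (meas_le_mono _ _ (4 * M * delta / Rabs p) _ (fun xi H => H)).
  - unfold Rdiv. apply Rmult_le_compat_l; [nra |]. apply Rinv_le_contravar; lra.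
  - apply strip_measure; auto. intros ->. rewrite Rabs_R0 in Hp. lra.
Qed.

Lemma lattice_strip_measure (M delta r alpha : R) (z1 z2 : Z) (f : pt -> R) :
  0 < M -> 0 < delta -> 0 < r -> (z1 <> 0%Z \/ z2 <> 0%Z) ->
  (forall xi, f xi = alpha + r * (IZR z1 * fst xi + IZR z2 * snd xi)) ->
  meas_le (fun xi => in_box M xi /\ Rabs (f xi) < delta) (4 * M * delta / r).
Proof.
  intros HM Hd Hr Hz Hf.
  assert (Habs : forall z, z <> 0%Z -> r <= Rabs (r * IZR z)).
  { intros z Hz0. rewrite Rabs_mult, Rabs_pos_eq by lra.
    assert (1 <= Rabs (IZR z)) by (rewrite <- abs_IZR; apply IZR_le; lia). nra. }
  destruct Hz as [Hz | Hz].
  - apply (meas_le_mono _ (fun xi => in_box M xi /\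
             Rabs (alpha + r * IZR z1 * fst xi + r * IZR z2 * snd xi) < delta) (4 * M * delta / r)); [| lra |].
    + intros xi. rewrite Hf. replace (alpha + r * (IZR z1 * fst xi + IZR z2 * snd xi))
        with (alpha + r * IZR z1 * fst xi + r * IZR z2 * snd xi) by ring. auto.
    + apply strip_measure_le; auto.
  - apply (meas_le_mono _ (fun xi => in_box M (snd xi, fst xi) /\
             Rabs (alpha + r * IZR z2 * fst (snd xi, fst xi) + r * IZR z1 * snd (snd xi, fst xi)) < delta)
      (4 * M * delta / r)); [| lra |].
    + intros [x y]. rewrite Hf. unfold in_box. cbn [fst snd].
      replace (alpha + r * (IZR z1 * x + IZR z2 * y)) with (alpha + r * IZR z2 * y + r * IZR z1 * x)
        by ring. tauto.
    + apply meas_le_swap with (A := fun xi => in_box M xi /\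
        Rabs (alpha + r * IZR z2 * fst xi + r * IZR z1 * snd xi) < delta).
      apply strip_measure_le; auto.
Qed.

Lemma quadratic_resonance_bound (E cs g r a : R) :
  0 <= cs -> 2 * cs < E -> 0 <= g <= E / 8 -> 1 <= a ->
  E * a ^ 2 - cs * a - r < g * a ^ 2 -> E * a <= 4 * r.
Proof.
  intros Hcs HE Hg Ha H.
  assert (g * a ^ 2 <= E / 8 * a ^ 2) by (apply Rmult_le_compat_r; [nra | lra]).
  assert (cs * a <= E / 2 * a) by (apply Rmult_le_compat_r; lra).
  assert (E * a <= E * a ^ 2) by (apply Rmult_le_compat_l; nra).
  nra.
Qed.

Lemma pair_resonance_bound (E cs g r a b : R) :
  0 <= cs -> 2 * cs < E -> 0 <= g <= E / 8 -> 1 <= a -> 1 <= b ->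
  E * (a ^ 2 + b ^ 2) - cs * (a + b) - r < g * (a + b) ^ 2 -> E * a <= 4 * r /\ E * b <= 4 * r.
Proof.
  intros Hcs HE Hg Ha Hb H.
  assert (g * (a + b) ^ 2 <= E / 8 * (2 * (a ^ 2 + b ^ 2))).
  { assert (2 * (a ^ 2 + b ^ 2) - (a + b) ^ 2 = (a - b) ^ 2) by ring.
    apply Rmult_le_compat; [lra | apply pow2_ge_0 | lra |].
    pose proof (pow2_ge_0 (a - b)). lra. }
  assert (cs * (a + b) <= E / 2 * (a + b)) by (apply Rmult_le_compat_r; lra).
  assert (E * a <= E * a ^ 2) by (apply Rmult_le_compat_l; nra).
  assert (E * b <= E * b ^ 2) by (apply Rmult_le_compat_l; nra).
  split; nra.
Qed.

Lemma difference_resonance_bound (E cs g r a b : R) :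
  0 <= cs -> 2 * cs < E -> 0 <= g <= E / 8 -> 0 <= b -> b + 1 <= a ->
  E * (a ^ 2 - b ^ 2) - cs * (a + b) - r < g * ((a - b) * (a + b)) -> E * a <= 4 * r.
Proof.
  intros Hcs HE Hg Hb Ha H.
  assert (Hab : a + b <= (a - b) * (a + b)) by nra.
  assert (g * ((a - b) * (a + b)) <= E / 8 * ((a - b) * (a + b))) by (apply Rmult_le_compat_r; nra).
  assert (cs * (a + b) <= E / 2 * (a + b)) by (apply Rmult_le_compat_r; lra).
  assert (E * (a + b) <= E * ((a - b) * (a + b))) by (apply Rmult_le_compat_l; nra).
  nra.
Qed.

Lemma linear_resonance_bound (cs g r a : R) :
  0 <= g <= cs -> 0 <= a -> 2 * cs * a - r < g * a -> cs * a <= r.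
Proof. intros Hg Ha H. assert (g * a <= cs * a) by (apply Rmult_le_compat_r; lra). lra. Qed.

Lemma affine_bound_on_box (M alpha p q : R) (xi : pt) :
  in_box M xi -> Rabs (alpha + p * fst xi + q * snd xi) <= Rabs alpha + (Rabs p + Rabs q) * M.
Proof.
  intros [Hx Hy].
  eapply Rle_trans; [apply Rabs_triang |]. eapply Rle_trans; [apply Rplus_le_compat_r, Rabs_triang |].
  rewrite !Rabs_mult. pose proof (Rabs_pos p). pose proof (Rabs_pos q). nra.
Qed.

Definition zrange (J : nat) : list Z :=
  map (fun n => (Z.of_nat n - Z.of_nat J)%Z) (seq 0 (2 * J + 1)).

Lemma length_zrange (J : nat) : length (zrange J) = (2 * J + 1)%nat.
Proof. unfold zrange. now rewrite length_map, length_seq. Qed.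

Lemma in_zrange (J : nat) (z : Z) : (Z.abs z <= Z.of_nat J)%Z -> In z (zrange J).
Proof.
  intros Hz. apply in_map_iff. exists (Z.to_nat (z + Z.of_nat J)).
  split; [lia | apply in_seq; lia].
Qed.

Lemma in_zrange_zabs (J : nat) (z : Z) : zabs z <= INR J -> In z (zrange J).
Proof. intros Hz. apply in_zrange. apply le_IZR. now rewrite <- INR_IZR_INZ. Qed.

Lemma Rabs_plus_ge (u v : R) : u - Rabs v <= Rabs (u + v).
Proof.
  pose proof (Rle_abs u). pose proof (Rabs_triang_inv u (- v)) as Htri.
  rewrite Rabs_Ropp in Htri. replace (u - - v) with (u + v) in Htri by ring. lra.
Qed.

Lemma Rabs_mult_sign (s : Z) (x : R) : (s = 1 \/ s = -1)%Z -> Rabs (IZR s * x) = Rabs x.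
Proof.
  intros [-> | ->]; rewrite Rabs_mult, <- abs_IZR; simpl Z.abs; ring.
Qed.

Lemma Rabs_lt_eq (u v theta : R) : u = v -> Rabs v < theta -> Rabs u < theta.
Proof. now intros ->. Qed.

Lemma zabs_Rabs (j : Z) : zabs j = Rabs (IZR j).
Proof. apply abs_IZR. Qed.

Lemma zabs_nonneg (j : Z) : 0 <= zabs j.
Proof. rewrite zabs_Rabs. apply Rabs_pos. Qed.

Lemma zabs_ge_1 (j : Z) : j <> 0%Z -> 1 <= zabs j.
Proof. intros Hj. apply IZR_le. lia. Qed.

Lemma zabs_sq (j : Z) : IZR j ^ 2 = zabs j ^ 2.
Proof. now rewrite zabs_Rabs, pow2_abs. Qed.

Lemma Rpower_neg_bounds (x tau : R) :
  1 <= x -> tau >= 8 ->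
  0 < Rpower x (- tau) /\ Rpower x (- tau) <= / x ^ 8 /\ Rpower x (- tau) <= 1.
Proof.
  intros Hx Htau. split; [apply exp_pos |].
  assert (Hle : Rpower x (- tau) <= Rpower x (- INR 8)) by (apply Rle_Rpower; [lra | simpl; lra]).
  rewrite (Rpower_Ropp x (INR 8)), Rpower_pow in Hle by lra.
  assert (1 <= x ^ 8) by (apply pow_R1_Rle; lra).
  assert (/ x ^ 8 <= 1) by (rewrite <- Rinv_1; apply Rinv_le_contravar; lra).
  split; lra.
Qed.

Lemma INR_odd_sq (n : nat) : INR ((2 * n + 1) * (2 * n + 1)) = (2 * INR n + 1) ^ 2.
Proof. rewrite mult_INR, plus_INR, mult_INR. simpl. ring. Qed.

(* The shell |k| = m has at most (2m+1)^2 <= 9 m^2 vectors; with J = D m each contributes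
   6 (2J+1)^2 strips of area K (2J+1)^2 m^(-tau), and 2J+1 <= 3 D m, m^(-2) <= 2 / (m (m+1)). *)
Lemma shell_bound_arith (m D K kt : R) :
  1 <= m -> 1 <= D -> 0 <= K -> 0 < kt -> kt <= / m ^ 8 ->
  (2 * m + 1) ^ 2 * (6 * (2 * (D * m) + 1) ^ 2 * (K * (2 * (D * m) + 1) ^ 2 * kt))
  <= 2 * 9 * 6 * 81 * K * D ^ 4 / (m * (m + 1)).
Proof.
  intros Hm HD HK Hkt Hkt8.
  set (y := 2 * (D * m) + 1).
  assert (Hy : 0 <= y <= 3 * D * m) by (unfold y; nra).
  assert (Hm2 : (2 * m + 1) ^ 2 <= 9 * m ^ 2) by nra.
  assert (Hy4 : y ^ 4 <= 81 * D ^ 4 * m ^ 4)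
    by (replace (81 * D ^ 4 * m ^ 4) with ((3 * D * m) ^ 4) by ring; apply pow_incr; lra).
  assert (Hm8 : 0 < m ^ 8) by (apply pow_lt; lra).
  assert (Hprod : (2 * m + 1) ^ 2 * y ^ 4 * kt <= 9 * 81 * D ^ 4 / m ^ 2).
  { apply Rle_trans with (9 * m ^ 2 * (81 * D ^ 4 * m ^ 4) * / m ^ 8).
    - assert (0 <= (2 * m + 1) ^ 2) by apply pow2_ge_0.
      assert (0 <= y ^ 4) by (apply pow_le; lra).
      apply Rmult_le_compat; [apply Rmult_le_pos; lra | lra | | lra].
      apply Rmult_le_compat; lra.
    - right. field. lra. }
  assert (Hquad : / m ^ 2 <= 2 / (m * (m + 1))).
  { apply Rmult_le_reg_r with (m ^ 2 * (m * (m + 1))); [nra |].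
    replace (/ m ^ 2 * (m ^ 2 * (m * (m + 1)))) with (m * (m + 1)) by (field; lra).
    replace (2 / (m * (m + 1)) * (m ^ 2 * (m * (m + 1)))) with (2 * m ^ 2) by (field; lra).
    nra. }
  replace ((2 * m + 1) ^ 2 * (6 * y ^ 2 * (K * y ^ 2 * kt)))
    with (6 * K * ((2 * m + 1) ^ 2 * y ^ 4 * kt)) by ring.
  apply Rle_trans with (6 * K * (9 * 81 * D ^ 4 * (2 / (m * (m + 1))))).
  - apply Rmult_le_compat_l; [lra |]. eapply Rle_trans; [exact Hprod |].
    unfold Rdiv. apply Rmult_le_compat_l; [| exact Hquad]. pose proof (pow_le D 4). lra.
  - right. field. lra.
Qed.

Lemma sum_inv_consecutive (N : nat) :
  sum_f_R0 (fun n => / (INR (S n) * (INR (S n) + 1))) N = 1 - / (INR (S N) + 1).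
Proof.
  induction N as [| N IH]; [simpl; field |].
  rewrite tech5, IH, !S_INR. pose proof (pos_INR N). field. lra.
Qed.

Lemma bounded_in_box (O : pt -> Prop) :
  (exists M, forall xi, O xi -> Rabs (fst xi) <= M /\ Rabs (snd xi) <= M) ->
  exists M, 0 < M /\ forall xi, O xi -> in_box M xi.
Proof.
  intros [M HM]. exists (Rabs M + 1). split; [pose proof (Rabs_pos M); lra |].
  intros xi Hxi. destruct (HM xi Hxi). pose proof (Rle_abs M). split; lra.
Qed.

(** * Small divisors *)

Definition sign_patterns : list (Z * Z) := [(0, 0); (1, 0); (-1, 0); (1, 1); (-1, -1); (1, -1)]%Z.

Section Model.

Variables (n1 n2 : Z) (c eps : R).
Hypothesis Hodd : Z.odd n1 = true.
Hypothesis Hdiff : (n2 - n1 = 4)%Z.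
Hypothesis Hc : c > 0.
Hypothesis Hepsc : / (eps ^ 4) > c / (2 * PI).

Definition Omega_shift (xi : pt) : R := / (4 * PI) * (IZR n1 * fst xi + IZR n2 * snd xi).

Lemma Omega_split (j : Z) (xi : pt) :
  Omega n1 n2 c eps j xi = / eps ^ 4 * IZR j ^ 2 + c / (4 * PI) * IZR j + Omega_shift xi.
Proof. unfold Omega, Omega_shift, Rdiv. ring. Qed.

(* The five conditions defining O_0 bound |small_div k s t i j| from below for (s, t) = (0, 0),
   (+-1, 0), (+-1, +-1), (1, -1) and (1, -1) with j = -i respectively. *)
Definition small_div (k1 k2 s t i j : Z) (xi : pt) : R :=
  kdot n1 n2 c eps k1 k2 xi + IZR s * Omega n1 n2 c eps i xi + IZR t * Omega n1 n2 c eps j xi.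

Lemma small_div_affine (k1 k2 s t i j : Z) (xi : pt) :
  small_div k1 k2 s t i j xi = small_div k1 k2 s t i j (0, 0)
    + / (4 * PI) * (IZR (- 4 * k1 + (s + t) * n1) * fst xi + IZR (4 * k2 + (s + t) * n2) * snd xi).
Proof.
  unfold small_div, kdot, omega1, omega2, Omega.
  replace (n1 - n2)%Z with (-4)%Z by lia. replace (n2 - n1)%Z with 4%Z by lia.
  rewrite !plus_IZR, !mult_IZR, !plus_IZR. simpl. ring.
Qed.

(* Since n1 is odd, (s + t) n1 is divisible by 4 only when s + t = 0. *)
Lemma small_div_gradient_nonzero (k1 k2 s t : Z) :
  (k1 <> 0 \/ k2 <> 0)%Z -> (-2 <= s + t <= 2)%Z ->
  (- 4 * k1 + (s + t) * n1 <> 0 \/ 4 * k2 + (s + t) * n2 <> 0)%Z.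
Proof.
  intros Hk Hst. apply Z.odd_spec in Hodd. destruct Hodd as [b Hb].
  assert (Hcases : (s + t = -2 \/ s + t = -1 \/ s + t = 0 \/ s + t = 1 \/ s + t = 2)%Z) by lia.
  destruct Hcases as [Hst' | [Hst' | [Hst' | [Hst' | Hst']]]]; rewrite Hst'; lia.
Qed.

Lemma small_div_strip (M delta : R) (k1 k2 s t i j : Z) :
  0 < M -> 0 < delta -> (k1 <> 0 \/ k2 <> 0)%Z -> (-2 <= s + t <= 2)%Z ->
  meas_le (fun xi => in_box M xi /\ Rabs (small_div k1 k2 s t i j xi) < delta)
          (16 * PI * M * delta).
Proof.
  intros HM Hd Hk Hst. pose proof PI_RGT_0.
  replace (16 * PI * M * delta) with (4 * M * delta / / (4 * PI)) by (field; lra).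
  apply lattice_strip_measure with (alpha := small_div k1 k2 s t i j (0, 0))
    (z1 := (- 4 * k1 + (s + t) * n1)%Z) (z2 := (4 * k2 + (s + t) * n2)%Z); auto.
  - apply Rinv_0_lt_compat. lra.
  - now apply small_div_gradient_nonzero.
  - intros xi. apply small_div_affine.
Qed.

Lemma frequencies_bounded_on_box (M : R) :
  0 <= M -> exists B, 0 <= B /\ forall xi, in_box M xi ->
    Rabs (omega1 n1 n2 c eps xi) <= B /\ Rabs (omega2 n1 n2 c eps xi) <= B /\
    Rabs (Omega_shift xi) <= B.
Proof.
  set (bound := fun alpha p q => Rabs alpha + (Rabs p + Rabs q) * M).
  set (a1 := / eps ^ 4 * IZR n1 ^ 2 + / (4 * PI) * IZR (n1 + n2) * c).
  set (a2 := / eps ^ 4 * IZR n2 ^ 2 + / (4 * PI) * IZR (n1 + n2) * c).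
  set (p1 := / (4 * PI) * IZR (n1 - n2)). set (q2 := / (4 * PI) * IZR (n2 - n1)).
  set (p3 := / (4 * PI) * IZR n1). set (q3 := / (4 * PI) * IZR n2).
  intros HM.
  assert (Hpos : forall alpha p q, 0 <= bound alpha p q).
  { intros alpha p q. unfold bound. pose proof (Rabs_pos alpha). pose proof (Rabs_pos p).
    pose proof (Rabs_pos q). nra. }
  pose proof (Hpos a1 p1 0). pose proof (Hpos a2 0 q2). pose proof (Hpos 0 p3 q3).
  exists (bound a1 p1 0 + bound a2 0 q2 + bound 0 p3 q3). split; [lra |].
  intros xi Hxi.
  pose proof (affine_bound_on_box M a1 p1 0 xi Hxi).
  pose proof (affine_bound_on_box M a2 0 q2 xi Hxi).
  pose proof (affine_bound_on_box M 0 p3 q3 xi Hxi).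
  replace (omega1 n1 n2 c eps xi) with (a1 + p1 * fst xi + 0 * snd xi)
    by (unfold omega1, a1, p1; ring).
  replace (omega2 n1 n2 c eps xi) with (a2 + 0 * fst xi + q2 * snd xi)
    by (unfold omega2, a2, q2; ring).
  replace (Omega_shift xi) with (0 + p3 * fst xi + q3 * snd xi)
    by (unfold Omega_shift, p3, q3; ring).
  unfold bound in *. repeat split; lra.
Qed.

Lemma kdot_bound (B : R) (k1 k2 : Z) (xi : pt) :
  Rabs (omega1 n1 n2 c eps xi) <= B -> Rabs (omega2 n1 n2 c eps xi) <= B ->
  Rabs (kdot n1 n2 c eps k1 k2 xi) <= knorm k1 k2 * B.
Proof.
  intros H1 H2. unfold kdot, knorm. rewrite plus_IZR, !abs_IZR.
  eapply Rle_trans; [apply Rabs_triang |]. rewrite !Rabs_mult.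
  pose proof (Rabs_pos (IZR k1)). pose proof (Rabs_pos (IZR k2)). nra.
Qed.

Definition main_part (s t i j : Z) : R :=
  IZR s * (/ eps ^ 4 * IZR i ^ 2 + c / (4 * PI) * IZR i)
  + IZR t * (/ eps ^ 4 * IZR j ^ 2 + c / (4 * PI) * IZR j).

Lemma small_div_split (k1 k2 s t i j : Z) (xi : pt) :
  small_div k1 k2 s t i j xi
  = main_part s t i j + (IZR (s + t) * Omega_shift xi + kdot n1 n2 c eps k1 k2 xi).
Proof. unfold small_div, main_part. rewrite !Omega_split, plus_IZR. ring. Qed.

Definition nonresonant_at (gamma tau : R) (k1 k2 : Z) (xi : pt) : Prop :=
  let w := kdot n1 n2 c eps k1 k2 xi in
  let kt := Rpower (knorm k1 k2) (- tau) in
  let Om := fun j => Omega n1 n2 c eps j xi in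
  Rabs w >= gamma * kt /\
  (forall j, inZ1 n1 n2 j ->
     Rabs (w + Om j) >= gamma * (zabs j) ^ 2 * kt /\
     Rabs (w - Om j) >= gamma * (zabs j) ^ 2 * kt) /\
  (forall i j, inZ1 n1 n2 i -> inZ1 n1 n2 j ->
     Rabs (w + (Om i + Om j)) >= gamma * (zabs i + zabs j) ^ 2 * kt /\
     Rabs (w - (Om i + Om j)) >= gamma * (zabs i + zabs j) ^ 2 * kt) /\
  (forall i j, inZ1 n1 n2 i -> inZ1 n1 n2 j -> zabs i <> zabs j ->
     Rabs (w + Om i - Om j) >= gamma * (zabs i - zabs j) * (zabs i + zabs j) * kt) /\
  (forall j, inZ1 n1 n2 j -> inZ1 n1 n2 (- j)%Z ->
     Rabs (w + Om j - Om (- j)%Z) >= gamma * zabs j * kt).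

Lemma scale_pos : 0 < c / (4 * PI).
Proof. pose proof PI_RGT_0. apply Rdiv_lt_0_compat; lra. Qed.

Lemma scale_lt : 2 * (c / (4 * PI)) < / eps ^ 4.
Proof. pose proof PI_RGT_0. replace (2 * (c / (4 * PI))) with (c / (2 * PI)) by (field; lra). lra. Qed.

Lemma inv_eps4_pos : 0 < / eps ^ 4.
Proof. pose proof scale_pos. pose proof scale_lt. lra. Qed.

Lemma not_O0_resonant (O : pt -> Prop) (gamma tau : R) (xi : pt) :
  O xi -> ~ O0 n1 n2 c eps O gamma tau xi ->
  exists k1 k2, (k1 <> 0 \/ k2 <> 0)%Z /\ ~ nonresonant_at gamma tau k1 k2 xi.
Proof.
  intros Hxi Hn. apply NNPP. intros Hnone. apply Hn. split; [exact Hxi |].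
  intros k1 k2 Hk. change (nonresonant_at gamma tau k1 k2 xi).
  apply NNPP. intros Hnr. apply Hnone. eauto.
Qed.

Lemma index_scale_exists (B : R) :
  0 <= B -> exists D : nat, (1 <= D)%nat /\ 12 * B <= / eps ^ 4 * INR D /\
                           3 * B <= c / (4 * PI) * INR D.
Proof.
  intros HB. pose proof inv_eps4_pos. pose proof scale_pos.
  destruct (nat_above (1 + 12 * B / / eps ^ 4 + 3 * B / (c / (4 * PI)))) as [D HD].
  assert (0 <= 12 * B / / eps ^ 4)
    by (unfold Rdiv; apply Rmult_le_pos; [lra | left; apply Rinv_0_lt_compat; lra]).
  assert (0 <= 3 * B / (c / (4 * PI)))
    by (unfold Rdiv; apply Rmult_le_pos; [lra | left; apply Rinv_0_lt_compat; lra]).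
  exists D. split; [apply INR_le; simpl; lra | split].
  - replace (12 * B) with (/ eps ^ 4 * (12 * B / / eps ^ 4))
      by (unfold Rdiv; rewrite Rmult_comm, Rmult_assoc, Rinv_l; lra).
    apply Rmult_le_compat_l; lra.
  - replace (3 * B) with (c / (4 * PI) * (3 * B / (c / (4 * PI))))
      by (unfold Rdiv at 2; rewrite Rmult_comm, Rmult_assoc, Rinv_l; lra).
    apply Rmult_le_compat_l; lra.
Qed.

Section IndexBounds.

Variables (M B gamma kt : R) (k1 k2 : Z) (J : nat).
Hypothesis HB : forall xi, in_box M xi ->
  Rabs (omega1 n1 n2 c eps xi) <= B /\ Rabs (omega2 n1 n2 c eps xi) <= B /\
  Rabs (Omega_shift xi) <= B.
Hypothesis Hk : 1 <= knorm k1 k2.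
Hypothesis HJ_quad : 4 * (3 * knorm k1 k2 * B) <= / eps ^ 4 * INR J.
Hypothesis HJ_lin : 3 * knorm k1 k2 * B <= c / (4 * PI) * INR J.
Hypothesis Hg_quad : 0 <= gamma * kt <= / eps ^ 4 / 8.
Hypothesis Hg_lin : gamma * kt <= c / (4 * PI).

Lemma main_part_small (s t i j : Z) (xi : pt) (theta : R) :
  in_box M xi -> (-2 <= s + t <= 2)%Z -> Rabs (small_div k1 k2 s t i j xi) < theta ->
  Rabs (main_part s t i j) < theta + 3 * knorm k1 k2 * B.
Proof.
  intros Hxi Hst Hsmall. destruct (HB xi Hxi) as (H1 & H2 & H3).
  pose proof (kdot_bound B k1 k2 xi H1 H2) as Hw.
  assert (Hst' : Rabs (IZR (s + t)) <= 2) by (rewrite <- abs_IZR; apply IZR_le; lia).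
  assert (HB0 : 0 <= B) by (pose proof (Rabs_pos (omega1 n1 n2 c eps xi)); lra).
  rewrite small_div_split in Hsmall.
  set (pert := IZR (s + t) * Omega_shift xi + kdot n1 n2 c eps k1 k2 xi) in Hsmall.
  pose proof (Rabs_triang (main_part s t i j + pert) (- pert)) as Htri.
  rewrite Rabs_Ropp in Htri. replace (main_part s t i j + pert + - pert) with (main_part s t i j) in Htri by ring.
  assert (Rabs pert <= 2 * B + knorm k1 k2 * B).
  { unfold pert. eapply Rle_trans; [apply Rabs_triang |]. rewrite Rabs_mult.
    assert (Rabs (IZR (s + t)) * Rabs (Omega_shift xi) <= 2 * B)
      by (apply Rmult_le_compat; auto using Rabs_pos).
    lra. }
  nra.
Qed.

Lemma index_le_of_quadratic (a : R) : / eps ^ 4 * a <= 4 * (3 * knorm k1 k2 * B) -> a <= INR J.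
Proof. intros Ha. pose proof inv_eps4_pos. apply (Rmult_le_reg_l (/ eps ^ 4)); lra. Qed.

Lemma index_le_of_linear (a : R) : c / (4 * PI) * a <= 3 * knorm k1 k2 * B -> a <= INR J.
Proof. intros Ha. pose proof scale_pos. apply (Rmult_le_reg_l (c / (4 * PI))); lra. Qed.

Lemma single_resonance_index (s j : Z) (xi : pt) :
  in_box M xi -> j <> 0%Z -> (s = 1 \/ s = -1)%Z ->
  Rabs (small_div k1 k2 s 0 j 0 xi) < gamma * zabs j ^ 2 * kt -> zabs j <= INR J.
Proof.
  intros Hxi Hj Hs Hsmall. pose proof inv_eps4_pos. pose proof scale_pos.
  pose proof (main_part_small s 0 j 0 xi _ Hxi ltac:(destruct Hs; subst; lia) Hsmall) as Hmain.
  unfold main_part in Hmain. rewrite Rmult_0_l, Rplus_0_r, Rabs_mult_sign in Hmain by exact Hs.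
  pose proof (Rabs_plus_ge (/ eps ^ 4 * IZR j ^ 2) (c / (4 * PI) * IZR j)) as Hlow.
  rewrite Rabs_mult, (Rabs_pos_eq (c / (4 * PI))), <- zabs_Rabs, zabs_sq in Hlow by lra.
  apply index_le_of_quadratic.
  apply (quadratic_resonance_bound _ (c / (4 * PI)) (gamma * kt)); auto using scale_lt, zabs_ge_1.
  - lra.
  - rewrite zabs_sq in Hmain. lra.
Qed.

Lemma pair_resonance_index (s i j : Z) (xi : pt) :
  in_box M xi -> i <> 0%Z -> j <> 0%Z -> (s = 1 \/ s = -1)%Z ->
  Rabs (small_div k1 k2 s s i j xi) < gamma * (zabs i + zabs j) ^ 2 * kt ->
  zabs i <= INR J /\ zabs j <= INR J.
Proof.
  intros Hxi Hi Hj Hs Hsmall. pose proof inv_eps4_pos. pose proof scale_pos.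
  pose proof (main_part_small s s i j xi _ Hxi ltac:(destruct Hs; subst; lia) Hsmall) as Hmain.
  replace (main_part s s i j) with (IZR s * (/ eps ^ 4 * (IZR i ^ 2 + IZR j ^ 2)
                                   + c / (4 * PI) * (IZR i + IZR j))) in Hmain
    by (unfold main_part; ring).
  rewrite Rabs_mult_sign, !zabs_sq in Hmain by exact Hs.
  pose proof (Rabs_plus_ge (/ eps ^ 4 * (zabs i ^ 2 + zabs j ^ 2)) (c / (4 * PI) * (IZR i + IZR j)))
    as Hlow.
  rewrite Rabs_mult, (Rabs_pos_eq (c / (4 * PI))) in Hlow by lra.
  assert (Rabs (IZR i + IZR j) <= zabs i + zabs j) by (rewrite !zabs_Rabs; apply Rabs_triang).
  assert (c / (4 * PI) * Rabs (IZR i + IZR j) <= c / (4 * PI) * (zabs i + zabs j))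
    by (apply Rmult_le_compat_l; lra).
  destruct (pair_resonance_bound (/ eps ^ 4) (c / (4 * PI)) (gamma * kt) (3 * knorm k1 k2 * B) (zabs i) (zabs j))
    as [Hbi Hbj]; auto using scale_lt, zabs_ge_1; [lra | lra |].
  split; apply index_le_of_quadratic; lra.
Qed.

Lemma difference_resonance_index (i j : Z) (xi : pt) :
  in_box M xi -> zabs i <> zabs j ->
  Rabs (small_div k1 k2 1 (-1) i j xi) < gamma * (zabs i - zabs j) * (zabs i + zabs j) * kt ->
  zabs i <= INR J /\ zabs j <= INR J.
Proof.
  intros Hxi Hij Hsmall. pose proof inv_eps4_pos. pose proof scale_pos.
  pose proof (zabs_nonneg i). pose proof (zabs_nonneg j).
  destruct (Rle_or_lt (zabs i) (zabs j)) as [Hle | Hlt].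
  - exfalso. pose proof (Rabs_pos (small_div k1 k2 1 (-1) i j xi)).
    assert (0 <= gamma * kt * ((zabs j - zabs i) * (zabs i + zabs j)))
      by (apply Rmult_le_pos; [lra | apply Rmult_le_pos; lra]).
    nra.
  - assert (Hstep : zabs j + 1 <= zabs i).
    { unfold zabs in *. rewrite <- plus_IZR. apply IZR_le. apply lt_IZR in Hlt. lia. }
    pose proof (main_part_small 1 (-1) i j xi _ Hxi ltac:(lia) Hsmall) as Hmain.
    replace (main_part 1 (-1) i j) with (/ eps ^ 4 * (IZR i ^ 2 - IZR j ^ 2)
                                        + c / (4 * PI) * (IZR i - IZR j)) in Hmain
      by (unfold main_part; ring).
    rewrite !zabs_sq in Hmain.
    pose proof (Rabs_plus_ge (/ eps ^ 4 * (zabs i ^ 2 - zabs j ^ 2)) (c / (4 * PI) * (IZR i - IZR j)))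
      as Hlow.
    rewrite Rabs_mult, (Rabs_pos_eq (c / (4 * PI))) in Hlow by lra.
    assert (Rabs (IZR i - IZR j) <= zabs i + zabs j)
      by (rewrite !zabs_Rabs, <- (Rabs_Ropp (IZR j)); apply Rabs_triang).
    assert (c / (4 * PI) * Rabs (IZR i - IZR j) <= c / (4 * PI) * (zabs i + zabs j))
      by (apply Rmult_le_compat_l; lra).
    pose proof (difference_resonance_bound (/ eps ^ 4) (c / (4 * PI)) (gamma * kt) (3 * knorm k1 k2 * B)
                  (zabs i) (zabs j)) as Hb.
    assert (/ eps ^ 4 * zabs i <= 4 * (3 * knorm k1 k2 * B))
      by (apply Hb; auto using scale_lt; [lra | lra]).
    assert (/ eps ^ 4 * zabs j <= / eps ^ 4 * zabs i) by (apply Rmult_le_compat_l; lra).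
    split; apply index_le_of_quadratic; lra.
Qed.

Lemma antipodal_resonance_index (j : Z) (xi : pt) :
  in_box M xi -> Rabs (small_div k1 k2 1 (-1) j (- j) xi) < gamma * zabs j * kt -> zabs j <= INR J.
Proof.
  intros Hxi Hsmall. pose proof scale_pos.
  pose proof (main_part_small 1 (-1) j (- j) xi _ Hxi ltac:(lia) Hsmall) as Hmain.
  replace (main_part 1 (-1) j (- j)) with (2 * (c / (4 * PI)) * IZR j) in Hmain
    by (unfold main_part; rewrite opp_IZR; ring).
  rewrite Rabs_mult, (Rabs_pos_eq (2 * (c / (4 * PI)))), <- zabs_Rabs in Hmain by lra.
  apply index_le_of_linear, (linear_resonance_bound _ (gamma * kt)); [lra | apply zabs_nonneg | lra].
Qed.

Variable tau : R.
Hypothesis Hkt : Rpower (knorm k1 k2) (- tau) = kt.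
Hypothesis Hk0 : (k1 <> 0 \/ k2 <> 0)%Z.
Hypothesis HM : 0 < M.
Hypothesis Hgamma : 0 < gamma.
Hypothesis Hkt_pos : 0 < kt.

Lemma resonance_witness (xi : pt) (s t i j : Z) (rho : R) :
  In (s, t) sign_patterns -> zabs i <= INR J -> zabs j <= INR J -> rho <= (2 * INR J + 1) ^ 2 ->
  Rabs (small_div k1 k2 s t i j xi) < gamma * rho * kt ->
  exists s t i j, In (s, t) sign_patterns /\ zabs i <= INR J /\ zabs j <= INR J /\
    Rabs (small_div k1 k2 s t i j xi) < gamma * (2 * INR J + 1) ^ 2 * kt.
Proof.
  intros Hst Hi Hj Hrho Hlt. exists s, t, i, j. repeat split; auto.
  eapply Rlt_le_trans; [exact Hlt |].
  apply Rmult_le_compat_r; [lra |]. apply Rmult_le_compat_l; lra.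
Qed.

Lemma resonance_in_bounded_strip (xi : pt) :
  in_box M xi -> ~ nonresonant_at gamma tau k1 k2 xi ->
  exists s t i j, In (s, t) sign_patterns /\ zabs i <= INR J /\ zabs j <= INR J /\
    Rabs (small_div k1 k2 s t i j xi) < gamma * (2 * INR J + 1) ^ 2 * kt.
Proof.
  intros Hxi Hnr. pose proof (pos_INR J).
  assert (Hz0 : zabs 0 <= INR J) by (unfold zabs; simpl; lra).
  apply NNPP. intros Hnone. apply Hnr. clear Hnr.
  unfold nonresonant_at. cbv beta zeta. rewrite Hkt.
  split; [| split; [| split; [| split]]].
  - apply Rnot_lt_ge; intro Hlt; apply Hnone.
    apply (resonance_witness xi 0 0 0 0 1); simpl; auto; [nra |].
    rewrite Rmult_1_r. eapply Rabs_lt_eq; [| exact Hlt]. unfold small_div. ring.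
  - intros j [Hj _]. pose proof (zabs_nonneg j).
    split; apply Rnot_lt_ge; intro Hlt; apply Hnone.
    + assert (Hsd : Rabs (small_div k1 k2 1 0 j 0 xi) < gamma * zabs j ^ 2 * kt)
        by (eapply Rabs_lt_eq; [| exact Hlt]; unfold small_div; ring).
      pose proof (single_resonance_index 1 j xi Hxi Hj (or_introl eq_refl) Hsd).
      apply (resonance_witness xi 1 0 j 0 (zabs j ^ 2)); simpl; auto. nra.
    + assert (Hsd : Rabs (small_div k1 k2 (-1) 0 j 0 xi) < gamma * zabs j ^ 2 * kt)
        by (eapply Rabs_lt_eq; [| exact Hlt]; unfold small_div; ring).
      pose proof (single_resonance_index (-1) j xi Hxi Hj (or_intror eq_refl) Hsd).
      apply (resonance_witness xi (-1) 0 j 0 (zabs j ^ 2)); simpl; auto. nra.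
  - intros i j [Hi _] [Hj _]. pose proof (zabs_nonneg i). pose proof (zabs_nonneg j).
    split; apply Rnot_lt_ge; intro Hlt; apply Hnone.
    + assert (Hsd : Rabs (small_div k1 k2 1 1 i j xi) < gamma * (zabs i + zabs j) ^ 2 * kt)
        by (eapply Rabs_lt_eq; [| exact Hlt]; unfold small_div; ring).
      destruct (pair_resonance_index 1 i j xi Hxi Hi Hj (or_introl eq_refl) Hsd).
      apply (resonance_witness xi 1 1 i j ((zabs i + zabs j) ^ 2)); simpl; auto. nra.
    + assert (Hsd : Rabs (small_div k1 k2 (-1) (-1) i j xi) < gamma * (zabs i + zabs j) ^ 2 * kt)
        by (eapply Rabs_lt_eq; [| exact Hlt]; unfold small_div; ring).
      destruct (pair_resonance_index (-1) i j xi Hxi Hi Hj (or_intror eq_refl) Hsd).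
      apply (resonance_witness xi (-1) (-1) i j ((zabs i + zabs j) ^ 2)); simpl; auto 8. nra.
  - intros i j _ _ Hij. apply Rnot_lt_ge; intro Hlt; apply Hnone.
    assert (Hsd : Rabs (small_div k1 k2 1 (-1) i j xi)
                  < gamma * (zabs i - zabs j) * (zabs i + zabs j) * kt)
      by (eapply Rabs_lt_eq; [| exact Hlt]; unfold small_div; ring).
    destruct (difference_resonance_index i j xi Hxi Hij Hsd).
    apply (resonance_witness xi 1 (-1) i j ((zabs i - zabs j) * (zabs i + zabs j))); simpl; auto 8.
    + pose proof (zabs_nonneg i). pose proof (zabs_nonneg j). nra.
    + rewrite <- Rmult_assoc. exact Hsd.
  - intros j _ _. apply Rnot_lt_ge; intro Hlt; apply Hnone.
    assert (Hsd : Rabs (small_div k1 k2 1 (-1) j (- j) xi) < gamma * zabs j * kt)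
      by (eapply Rabs_lt_eq; [| exact Hlt]; unfold small_div; ring).
    pose proof (antipodal_resonance_index j xi Hxi Hsd) as HjJ.
    apply (resonance_witness xi 1 (-1) j (- j) (zabs j)); simpl; auto 8.
    + unfold zabs. rewrite Z.abs_opp. exact HjJ.
    + pose proof (zabs_nonneg j). nra.
Qed.

Lemma resonant_set_measure :
  meas_le (fun xi => in_box M xi /\ ~ nonresonant_at gamma tau k1 k2 xi)
    (INR (6 * ((2 * J + 1) * (2 * J + 1))) * (16 * PI * M * (gamma * (2 * INR J + 1) ^ 2 * kt))).
Proof.
  set (delta := gamma * (2 * INR J + 1) ^ 2 * kt).
  set (idx := list_prod sign_patterns (list_prod (zrange J) (zrange J))).
  set (strip := fun (y : (Z * Z) * (Z * Z)) xi => in_box M xi /\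
         Rabs (small_div k1 k2 (fst (fst y)) (snd (fst y)) (fst (snd y)) (snd (snd y)) xi) < delta).
  pose proof (pos_INR J). pose proof PI_RGT_0.
  assert (Hdelta : 0 < delta) by (unfold delta; apply Rmult_lt_0_compat; [| lra]; nra).
  replace (6 * ((2 * J + 1) * (2 * J + 1)))%nat with (length idx)
    by (unfold idx; now rewrite !length_prod, !length_zrange).
  apply (meas_le_union_list idx strip).
  - left. apply Rmult_lt_0_compat; [| exact Hdelta]. apply Rmult_lt_0_compat; [lra | exact HM].
  - intros xi [Hxi Hnr].
    destruct (resonance_in_bounded_strip xi Hxi Hnr) as (s & t & i & j & Hst & Hi & Hj & Hsmall).
    exists ((s, t), (i, j)). split; [| split; assumption].
    apply in_prod; [exact Hst | apply in_prod; apply in_zrange_zabs; assumption].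
  - intros [[s t] [i j]] Hin. apply in_prod_iff in Hin as [Hst _].
    apply small_div_strip; auto.
    simpl in Hst. destruct Hst as [E | [E | [E | [E | [E | [E | []]]]]]]; injection E as <- <-; simpl; lia.
Qed.

End IndexBounds.

Lemma vector_resonant_measure (M B gamma tau : R) (D m : nat) (k1 k2 : Z) :
  (forall xi, in_box M xi ->
     Rabs (omega1 n1 n2 c eps xi) <= B /\ Rabs (omega2 n1 n2 c eps xi) <= B /\
     Rabs (Omega_shift xi) <= B) ->
  12 * B <= / eps ^ 4 * INR D -> 3 * B <= c / (4 * PI) * INR D ->
  0 < M -> 0 < gamma -> gamma <= / eps ^ 4 / 8 -> gamma <= c / (4 * PI) -> tau >= 8 ->
  (Z.abs k1 + Z.abs k2 = Z.of_nat m)%Z -> (k1 <> 0 \/ k2 <> 0)%Z ->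
  meas_le (fun xi => in_box M xi /\ ~ nonresonant_at gamma tau k1 k2 xi)
    (INR (6 * ((2 * (D * m) + 1) * (2 * (D * m) + 1)))
     * (16 * PI * M * (gamma * (2 * INR (D * m) + 1) ^ 2 * Rpower (INR m) (- tau)))).
Proof.
  intros HB HD_quad HD_lin HM Hgamma Hg_quad Hg_lin Htau Hkm Hk0.
  assert (Hknorm : knorm k1 k2 = INR m) by (unfold knorm; rewrite Hkm, INR_IZR_INZ; reflexivity).
  assert (Hm1 : 1 <= INR m) by (rewrite <- Hknorm; unfold knorm; apply IZR_le; lia).
  destruct (Rpower_neg_bounds (INR m) tau Hm1 Htau) as (Hkt0 & _ & Hkt1).
  assert (gamma * Rpower (INR m) (- tau) <= gamma) by nra.
  apply (resonant_set_measure M B gamma _ k1 k2 (D * m) HB); rewrite ?Hknorm, ?mult_INR; auto.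
  - nra.
  - nra.
  - split; [nra | lra].
  - lra.
Qed.

Lemma shell_measure (M B gamma tau : R) (D m : nat) :
  (forall xi, in_box M xi ->
     Rabs (omega1 n1 n2 c eps xi) <= B /\ Rabs (omega2 n1 n2 c eps xi) <= B /\
     Rabs (Omega_shift xi) <= B) ->
  12 * B <= / eps ^ 4 * INR D -> 3 * B <= c / (4 * PI) * INR D -> (1 <= D)%nat ->
  0 < M -> 0 < gamma -> gamma <= / eps ^ 4 / 8 -> gamma <= c / (4 * PI) -> tau >= 8 ->
  (1 <= m)%nat ->
  meas_le (fun xi => in_box M xi /\ exists k1 k2, (Z.abs k1 + Z.abs k2 = Z.of_nat m)%Z /\
             (k1 <> 0 \/ k2 <> 0)%Z /\ ~ nonresonant_at gamma tau k1 k2 xi)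
    (2 * 9 * 6 * 81 * (16 * PI * M * gamma) * INR D ^ 4 / (INR m * (INR m + 1))).
Proof.
  intros HB HD_quad HD_lin HD HM Hgamma Hg_quad Hg_lin Htau Hm.
  assert (Hm1 : 1 <= INR m) by (apply (le_INR 1); lia).
  assert (HD1 : 1 <= INR D) by (apply (le_INR 1); lia).
  destruct (Rpower_neg_bounds (INR m) tau Hm1 Htau) as (Hkt0 & Hkt8 & _).
  set (V := INR (6 * ((2 * (D * m) + 1) * (2 * (D * m) + 1)))
            * (16 * PI * M * (gamma * (2 * INR (D * m) + 1) ^ 2 * Rpower (INR m) (- tau)))).
  assert (HPM : 0 <= 16 * PI * M) by (pose proof PI_RGT_0; nra).
  assert (HV : 0 <= V).
  { apply Rmult_le_pos; [apply pos_INR |]. apply Rmult_le_pos; [lra |].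
    apply Rmult_le_pos; [apply Rmult_le_pos; [lra | apply pow2_ge_0] | lra]. }
  set (bad := fun (k : Z * Z) xi => in_box M xi /\ (Z.abs (fst k) + Z.abs (snd k) = Z.of_nat m)%Z /\
      (fst k <> 0 \/ snd k <> 0)%Z /\ ~ nonresonant_at gamma tau (fst k) (snd k) xi).
  apply (meas_le_mono _ (fun xi => exists k, In k (list_prod (zrange m) (zrange m)) /\ bad k xi)
    (INR (length (list_prod (zrange m) (zrange m))) * V)).
  - intros xi (Hxi & k1 & k2 & Hkm & Hk0 & Hnr). exists (k1, k2).
    split; [apply in_prod; apply in_zrange; lia | exact (conj Hxi (conj Hkm (conj Hk0 Hnr)))].
  - rewrite length_prod, length_zrange, INR_odd_sq. unfold V.
    rewrite mult_INR, INR_odd_sq, mult_INR.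
    replace (16 * PI * M * (gamma * (2 * (INR D * INR m) + 1) ^ 2 * Rpower (INR m) (- tau)))
      with (16 * PI * M * gamma * (2 * (INR D * INR m) + 1) ^ 2 * Rpower (INR m) (- tau)) by ring.
    replace (INR 6) with 6 by (simpl; ring).
    apply shell_bound_arith; auto. nra.
  - apply (meas_le_union_list _ bad); [exact HV | auto |].
    intros [k1 k2] _. unfold bad; simpl.
    destruct (Z.eq_dec (Z.abs k1 + Z.abs k2) (Z.of_nat m)) as [Hkm | Hkm].
    2: { apply meas_le_empty; [| exact HV]. intros xi (_ & Hkm' & _). contradiction. }
    destruct (classic ((k1 <> 0 \/ k2 <> 0)%Z)) as [Hk0 | Hk0].
    2: { apply meas_le_empty; [| exact HV]. intros xi (_ & _ & Hk0' & _). contradiction. }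
    apply (meas_le_mono _ (fun xi => in_box M xi /\ ~ nonresonant_at gamma tau k1 k2 xi) V);
      [intros xi (Hxi & _ & _ & Hnr); auto | lra |].
    apply vector_resonant_measure with (B := B); auto.
Qed.

Lemma resonant_measure (M B gamma tau : R) (D : nat) :
  (forall xi, in_box M xi ->
     Rabs (omega1 n1 n2 c eps xi) <= B /\ Rabs (omega2 n1 n2 c eps xi) <= B /\
     Rabs (Omega_shift xi) <= B) ->
  12 * B <= / eps ^ 4 * INR D -> 3 * B <= c / (4 * PI) * INR D -> (1 <= D)%nat ->
  0 < M -> 0 < gamma -> gamma <= / eps ^ 4 / 8 -> gamma <= c / (4 * PI) -> tau >= 8 ->
  meas_le (fun xi => in_box M xi /\ exists k1 k2,
             (k1 <> 0 \/ k2 <> 0)%Z /\ ~ nonresonant_at gamma tau k1 k2 xi)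
    (2 * 9 * 6 * 81 * (16 * PI * M) * INR D ^ 4 * gamma).
Proof.
  intros HB HD_quad HD_lin HD HM Hgamma Hg_quad Hg_lin Htau.
  set (C := 2 * 9 * 6 * 81 * (16 * PI * M) * INR D ^ 4).
  assert (HC : 0 < C).
  { pose proof PI_RGT_0. assert (0 < INR D ^ 4) by (apply pow_lt, (lt_INR 0); lia).
    assert (0 < 16 * PI * M) by nra. unfold C. nra. }
  apply (meas_le_countable_union _
    (fun n xi => in_box M xi /\ exists k1 k2, (Z.abs k1 + Z.abs k2 = Z.of_nat (S n))%Z /\
       (k1 <> 0 \/ k2 <> 0)%Z /\ ~ nonresonant_at gamma tau k1 k2 xi)
    (fun n => C * gamma * / (INR (S n) * (INR (S n) + 1)))).
  - intros xi (Hxi & k1 & k2 & Hk0 & Hnr).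
    exists (Z.to_nat (Z.abs k1 + Z.abs k2) - 1)%nat. split; [exact Hxi |].
    exists k1, k2. split; [lia | auto].
  - intros n.
    replace (C * gamma * / (INR (S n) * (INR (S n) + 1)))
      with (2 * 9 * 6 * 81 * (16 * PI * M * gamma) * INR D ^ 4 / (INR (S n) * (INR (S n) + 1)))
      by (unfold C, Rdiv; ring).
    apply shell_measure with (B := B); auto; lia.
  - intros N.
    rewrite (sum_eq _ (fun n => / (INR (S n) * (INR (S n) + 1)) * (C * gamma))) by (intros; ring).
    rewrite <- scal_sum, sum_inv_consecutive.
    assert (0 < / (INR (S N) + 1)) by (apply Rinv_0_lt_compat; pose proof (pos_INR (S N)); lra).
    assert (0 < C * gamma) by nra. nra.
Qed.

End Model.

Theorem proposition4p2
  (n1 n2 : Z) (c eps : R) (Oset : pt -> Prop)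
  (Hn1pos : (0 < n1)%Z) (Hn12 : (n1 < n2)%Z) (Hodd : Z.odd n1 = true)
  (Hdiff : (n2 - n1 = 4)%Z)
  (Hc : c > 0) (Heps : eps > 0) (Hepsc : / (eps ^ 4) > c / (2 * PI))
  (Hpos : forall xi, Oset xi -> fst xi > 0 /\ snd xi > 0)
  (Hbdd : exists M, forall xi, Oset xi -> Rabs (fst xi) <= M /\ Rabs (snd xi) <= M) :
  exists tau0 : R, forall tau : R, tau >= tau0 ->
    exists gamma0 C : R, gamma0 > 0 /\ C > 0 /\
      forall gamma : R, 0 < gamma <= gamma0 ->
        meas_le (fun xi => Oset xi /\ ~ O0 n1 n2 c eps Oset gamma tau xi) (C * gamma).
Proof.
  destruct (bounded_in_box Oset Hbdd) as (M & HM & Hbox).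
  destruct (frequencies_bounded_on_box n1 n2 c eps M ltac:(lra)) as (B & HB0 & HB).
  destruct (index_scale_exists c eps Hc Hepsc B HB0) as (D & HD & HD_quad & HD_lin).
  pose proof (inv_eps4_pos c eps Hc Hepsc). pose proof (scale_pos c Hc).
  exists 8. intros tau Htau.
  exists (Rmin (/ eps ^ 4 / 8) (c / (4 * PI))), (2 * 9 * 6 * 81 * (16 * PI * M) * INR D ^ 4).
  split; [apply Rmin_pos; lra | split].
  - pose proof PI_RGT_0. assert (0 < INR D ^ 4) by (apply pow_lt, (lt_INR 0); lia).
    assert (0 < 16 * PI * M) by nra. nra.
  - intros gamma [Hgamma Hgamma0].
    pose proof (Rmin_l (/ eps ^ 4 / 8) (c / (4 * PI))). pose proof (Rmin_r (/ eps ^ 4 / 8) (c / (4 * PI))).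
    refine (meas_le_mono _ _ _ _ _ (Rle_refl _)
              (resonant_measure n1 n2 c eps Hodd Hdiff Hc Hepsc M B gamma tau D HB HD_quad HD_lin
                 HD HM Hgamma ltac:(lra) ltac:(lra) Htau)).
    intros xi [Hxi Hn]. split; [exact (Hbox xi Hxi) |].
    exact (not_O0_resonant n1 n2 c eps Oset gamma tau xi Hxi Hn).
Qed.
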